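(* Let $2\le m\le n\le\ell$ with $(m-1)n<\ell<mn$. Then $\ell$ is the unique typical rank of real $m\times n\times\ell$ tensors.
   Context: An integer $r>0$ is a typical rank for the format $m\times n\times\ell$ if $\Pr\{\mathrm{rank}(T)=r\}>0$ for a tensor $T\in\mathbb R^{m\times n\times\ell}$ with i.i.d. standard Gaussian entries; rank is the minimal number of rank-one tensors $a\otimes b\otimes c$ summing to $T$. *)

From HB Require Import structures.
From mathcomp Require Import all_boot all_order all_algebra.
From mathcomp Require Import all_classical all_reals all_analysis.

Set Implicit Arguments.
Unset Strict Implicit.
Unset Printing Implicit Defensive.

Import Order.TTheory GRing.Theory Num.Theory.

Local Open Scope classical_set_scope.
Local Open Scope ring_scope.

Definition tensor (R : Type) (m n l : nat) := 'I_m -> 'I_n -> 'I_l -> R.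

Definition rank_le {R : realType} {m n l : nat} (T : tensor R m n l) (r : nat) : Prop :=
  exists (a : 'I_r -> 'I_m -> R) (b : 'I_r -> 'I_n -> R) (c : 'I_r -> 'I_l -> R),
    forall i j k, T i j k = \sum_(p < r) a p i * b p j * c p k.

Definition tensor_rank_eq {R : realType} {m n l : nat} (T : tensor R m n l) (r : nat) : Prop :=
  rank_le T r /\ forall r', rank_le T r' -> (r <= r')%N.

Definition tensor_of_seq {R : realType} (m n l : nat) (s : seq R) : tensor R m n l :=
  fun i j k => nth 0 s ((i * n + j) * l + k)%N.
Arguments tensor_of_seq {R} m n l s.

(* Iterated integral against N independent standard Gaussians:
   gauss_iter N f = \int phi(x_N) ... \int phi(x_1) f [:: x_1; ...; x_N]. *)
Fixpoint gauss_iter {R : realType} (N : nat) (f : seq R -> \bar R) : \bar R :=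
  match N with
  | 0 => f [::]
  | N'.+1 => gauss_iter N' (fun s => (\int[normal_prob (0:R) 1]_x f (x :: s))%E)
  end.

(* Probability that an m x n x l tensor with i.i.d. standard Gaussian entries
   lies in the set A (standard Gaussian measure on R^(m*n*l), by Fubini). *)
Definition gauss_tensor_prob {R : realType} (m n l : nat) (A : set (tensor R m n l)) : \bar R :=
  gauss_iter (m * n * l)%N
    (fun s : seq R => (@indic (tensor R m n l) R A (tensor_of_seq m n l s))%:E).

Arguments gauss_tensor_prob {R} m n l A.

Definition typical_rank (R : realType) (m n l r : nat) : Prop :=
  (0 < r)%N /\
  (0 < gauss_tensor_prob m n l [set T : tensor R m n l | tensor_rank_eq T r])%E.

From HB Require Import structures.
From mathcomp Require Import all_boot all_order all_algebra.
From mathcomp Require Import all_classical all_reals all_analysis.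
From mathcomp Require Import polyrcf ring zify.

(* Let [T_ij] in [R^l] be the fibres of [T].  If their Gram matrix is
   invertible they span [R^l], while a decomposition into [r] rank-one terms
   puts them in the span of [r] vectors; hence [rank T >= l].  Conversely,
   since [(m - 1) n < l], for each [p < l] there is a vector [C_p] orthogonal
   to the [(m - 1) n] vectors [T_ij - x_p(i) T_(piv p, j)] ([i <> piv p]) and
   to [l - 1 - (m - 1) n] unit vectors; then [<C_p, T_ij> = x_p(i) y_p(j)],
   and if the matrix [C] is invertible, [T = sum_p x_p (x) y_p (x) C^-1 e_p],
   so [rank T <= l].  Taking [C_p] to be the last column of an adjugate, both
   conditions say that a polynomial in the entries of [T] does not vanish.
   An explicit tensor shows this polynomial is not identically zero, and the
   zero set of such a polynomial is a Gaussian null set, because a nonzero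
   univariate polynomial has finitely many roots.  So [rank T = l] almost
   surely. *)

Set Implicit Arguments.
Unset Strict Implicit.
Unset Printing Implicit Defensive.

Import Order.TTheory GRing.Theory Num.Theory.

Local Open Scope classical_set_scope.
Local Open Scope ring_scope.

(* No measurability needed: both sides are suprema over simple functions. *)
Lemma le_integral_ge0 d (T : measurableType d) (R : realType)
    (mu : {measure set T -> \bar R}) (f g : T -> \bar R) :
  (forall x, (0 <= f x)%E) -> (forall x, (f x <= g x)%E) ->
  (\int[mu]_x f x <= \int[mu]_x g x)%E.
Proof.
move=> f0 fg; have g0 x : (0 <= g x)%E by exact: le_trans (f0 x) (fg x).
rewrite (ge0_integralTE _ f0) (ge0_integralTE _ g0) /=.
apply: ereal_sup_le => _ [h hf <-]; exists h => //= x.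
exact: le_trans (hf x) (fg x).
Qed.

Lemma poly_roots_in_seq (R : rcfType) (p : {poly R}) : p != 0 ->
  exists rs : seq R, forall x, p.[x] = 0 -> x \in rs.
Proof.
move=> p0; exists (rootsR p) => x /rootP px.
by rewrite -(roots_on_rootsR p0 x) px andbT.
Qed.

Section NormalProbFinite.
Variable R : realType.
Local Notation mu := (@normal_prob R 0 1).

Lemma measurable_seq_set (rs : seq R) : measurable [set` rs].
Proof.
apply: countable_measurable; first by move=> t; exact: measurable_set1.
exact/finite_set_countable/finite_seq.
Qed.

Lemma normal_prob_seq_set (rs : seq R) : mu [set` rs] = 0%E.
Proof.
apply: (normal_prob_dominates 0 1 _ (measurable_seq_set rs) (@subset_refl _ _)).
move=> A mA sA; apply: countable_lebesgue_measure0.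
apply: (sub_countable _ (finite_set_countable (finite_seq rs))).
exact: subset_card_le.
Qed.

Lemma normal_prob_setC_seq_set (rs : seq R) : mu (~` [set` rs]) = 1%E.
Proof.
rewrite probability_setC; last exact: measurable_seq_set.
by rewrite [X in (_ - X)%E](_ : _ = 0%E) ?sube0 //; exact: normal_prob_seq_set.
Qed.

Lemma integral_ge1_off_seq (h : R -> \bar R) (rs : seq R) :
  (forall x, (0 <= h x)%E) -> (forall x, x \notin rs -> (1 <= h x)%E) ->
  (1 <= \int[mu]_x h x)%E.
Proof.
move=> h0 h1; have mC := measurableC (measurable_seq_set rs).
apply: (@le_trans _ _ (\int[mu]_x (\1_(~` [set` rs]) x)%:E)%E).
  rewrite integral_indic // setIT [X in (_ <= X)%E](_ : _ = 1%E) //.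
  exact: normal_prob_setC_seq_set.
apply: le_integral_ge0 => x; first by rewrite lee_fin.
rewrite /indic /=; have [xin|_] := boolP (x \in ~` [set` rs]); last first.
  by rewrite mulr0n; exact: h0.
by rewrite mulr1n; apply: h1; apply/negP => xr; move: xin; rewrite inE; apply.
Qed.

Lemma integral_le0_off_seq (h : R -> \bar R) (rs : seq R) :
  (forall x, (0 <= h x <= 1)%E) -> (forall x, x \notin rs -> h x = 0%E) ->
  (\int[mu]_x h x <= 0)%E.
Proof.
move=> h01 h0.
apply: (@le_trans _ _ (\int[mu]_x (\1_([set` rs]) x)%:E)%E); last first.
  rewrite integral_indic //; last exact: measurable_seq_set.
  by rewrite setIT [X in (X <= _)%E](_ : _ = 0%E) //; exact: normal_prob_seq_set.
apply: le_integral_ge0 => x; first by have /andP[] := h01 x.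
rewrite /indic /=; have [xin|xout] := boolP (x \in [set` rs]).
  by rewrite mulr1n; have /andP[] := h01 x.
by rewrite mulr0n h0 //; apply: contra xout; rewrite inE.
Qed.

Lemma integral_le1 (h : R -> \bar R) :
  (forall x, (0 <= h x <= 1)%E) -> (\int[mu]_x h x <= 1)%E.
Proof.
move=> h01; apply: (@le_trans _ _ (\int[mu]_x (1%E : \bar R))%E).
  by apply: le_integral_ge0 => x; have /andP[] := h01 x.
by rewrite integral_cst //= probability_setT mul1e.
Qed.

End NormalProbFinite.

Section PolynomialFunctions.
Variable R : realType.
Implicit Types (f g : seq R -> R).

(* [f s] is a polynomial in [s_0, .., s_(N-1)], and ignores the rest of [s]. *)
Fixpoint polyfun (N : nat) (f : seq R -> R) : Prop :=
  match N with
  | 0 => exists a : R, forall s, f s = a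
  | N'.+1 => exists (I : finType) (c : I -> seq R -> R) (e : I -> nat),
      (forall i, polyfun N' (c i)) /\
      forall x s, f (x :: s) = \sum_(i : I) c i s * x ^+ e i
  end.

Lemma eq_polyfun N f g : (forall s, f s = g s) -> polyfun N f -> polyfun N g.
Proof. by move=> fg; have -> : f = g by apply/funext. Qed.

Lemma polyfun_cst N (a : R) : polyfun N (fun _ => a).
Proof.
elim: N => [|N IH]; first by exists a.
exists 'I_1, (fun _ _ => a), (fun _ => 0%N); split => // x s.
by rewrite big_ord1 expr0 mulr1.
Qed.

Lemma polyfunD N f g : polyfun N f -> polyfun N g -> polyfun N (fun s => f s + g s).
Proof.
case: N => [|N] in f g *.
  by move=> [a fa] [b gb]; exists (a + b) => s; rewrite fa gb.
move=> [I1 [c1 [e1 [h1 E1]]]] [I2 [c2 [e2 [h2 E2]]]].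
exists (I1 + I2)%type, (fun t => match t with inl i => c1 i | inr j => c2 j end),
  (fun t => match t with inl i => e1 i | inr j => e2 j end); split; first by case.
by move=> x s; rewrite big_sumType /= E1 E2.
Qed.

Lemma polyfunM N f g : polyfun N f -> polyfun N g -> polyfun N (fun s => f s * g s).
Proof.
elim: N f g => [|N IH] f g.
  by move=> [a fa] [b gb]; exists (a * b) => s; rewrite fa gb.
move=> [I1 [c1 [e1 [h1 E1]]]] [I2 [c2 [e2 [h2 E2]]]].
exists (I1 * I2)%type, (fun t s => c1 t.1 s * c2 t.2 s),
  (fun t => (e1 t.1 + e2 t.2)%N); split; first by case=> i j; apply: IH; [exact: h1|exact: h2].
move=> x s; rewrite E1 E2 big_distrlr /= pair_bigA /=.
by apply: eq_bigr => -[i j] _ /=; rewrite exprD; ring.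
Qed.

Lemma polyfun_sum N (I : Type) (r : seq I) (P : pred I) (F : I -> seq R -> R) :
  (forall i, polyfun N (F i)) -> polyfun N (fun s => \sum_(i <- r | P i) F i s).
Proof.
move=> HF; apply: (eq_polyfun (f := fun s => \sum_(i <- r) if P i then F i s else 0)).
  by move=> s; rewrite [RHS]big_mkcond.
elim: r => [|a r IHr].
  by apply: (eq_polyfun (f := fun _ => 0)) (polyfun_cst _ _) => s; rewrite big_nil.
apply: (eq_polyfun (f := fun s => (if P a then F a s else 0) + \sum_(i <- r) _)).
  by move=> s; rewrite big_cons.
by apply: polyfunD => //; case: (P a); [exact: HF|exact: polyfun_cst].
Qed.

Lemma polyfun_prod N (I : Type) (r : seq I) (F : I -> seq R -> R) :
  (forall i, polyfun N (F i)) -> polyfun N (fun s => \prod_(i <- r) F i s).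
Proof.
move=> HF; elim: r => [|a r IHr].
  by apply: (eq_polyfun (f := fun _ => 1)) (polyfun_cst _ _) => s; rewrite big_nil.
apply: (eq_polyfun (f := fun s => F a s * \prod_(i <- r) F i s)).
  by move=> s; rewrite big_cons.
exact: polyfunM.
Qed.

Lemma polyfun_nth N i : (i < N)%N -> polyfun N (fun s => nth 0 s i).
Proof.
elim: N i => [|N IH] [|i] //= Hi.
  exists 'I_1, (fun _ _ => 1), (fun _ => 1%N); split => [_|x s].
    exact: polyfun_cst.
  by rewrite big_ord1 mul1r expr1.
exists 'I_1, (fun _ s => nth 0 s i), (fun _ => 0%N); split => [_|x s].
  exact: IH.
by rewrite big_ord1 expr0 mulr1.
Qed.

Lemma polyfun_det N k (A : seq R -> 'M[R]_k) :
  (forall i j, polyfun N (fun s => A s i j)) -> polyfun N (fun s => \det (A s)).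
Proof.
move=> HA; apply: polyfun_sum => sg.
by apply: polyfunM; [exact: polyfun_cst|apply: polyfun_prod => i; exact: HA].
Qed.

Lemma polyfun_adj N k (A : seq R -> 'M[R]_k) :
  (forall i j, polyfun N (fun s => A s i j)) ->
  forall i j, polyfun N (fun s => \adj (A s) i j).
Proof.
move=> HA i j; apply: (eq_polyfun (f := fun s => cofactor (A s) j i)).
  by move=> s; rewrite mxE.
apply: polyfunM; first exact: polyfun_cst.
apply: (polyfun_det (A := fun s => row' j (col' i (A s)))) => a b.
apply: (eq_polyfun (f := fun s => A s (lift j a) (lift i b))); last exact: HA.
by move=> s; rewrite !mxE.
Qed.

End PolynomialFunctions.

Section GaussianGenericity.
Variable R : realType.

Definition poly_of_terms (I : finType) (c : I -> R) (e : I -> nat) : {poly R} :=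
  \sum_(t : I) c t *: 'X^(e t).

Lemma coef_poly_of_terms (I : finType) (c : I -> R) (e : I -> nat) k :
  (poly_of_terms c e)`_k = \sum_(t : I) c t * (e t == k)%:R.
Proof.
rewrite coef_sum; apply: eq_bigr => t _.
by rewrite coefZ coefXn eq_sym.
Qed.

Lemma horner_poly_of_terms (I : finType) (c : I -> R) (e : I -> nat) x :
  (poly_of_terms c e).[x] = \sum_(t : I) c t * x ^+ e t.
Proof.
rewrite horner_sum; apply: eq_bigr => t _.
by rewrite hornerZ hornerXn.
Qed.

Lemma terms_coef_neq0 (I : finType) (c : I -> R) (e : I -> nat) x :
  \sum_(t : I) c t * x ^+ e t != 0 -> exists k, \sum_(t : I) c t * (e t == k)%:R != 0.
Proof.
rewrite -horner_poly_of_terms => px.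
have /eqP/polyP/existsNP [k ck] : poly_of_terms c e != 0.
  by apply: contraNneq px => ->; rewrite horner0.
by exists k; rewrite -coef_poly_of_terms; apply/eqP; move: ck; rewrite coef0.
Qed.

Lemma terms_neq0_off_seq (I : finType) (c : I -> R) (e : I -> nat) k :
  \sum_(t : I) c t * (e t == k)%:R != 0 ->
  exists rs : seq R, forall x, x \notin rs -> \sum_(t : I) c t * x ^+ e t != 0.
Proof.
rewrite -coef_poly_of_terms => ck.
have p0 : poly_of_terms c e != 0 by apply: contraNneq ck => ->; rewrite coef0.
have [rs Hrs] := poly_roots_in_seq p0.
exists rs => x; rewrite -horner_poly_of_terms; apply: contra => /eqP.
exact: Hrs.
Qed.

Lemma polyfun_coef_terms N (I : finType) (c : I -> seq R -> R) (e : I -> nat) k :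
  (forall t, polyfun N (c t)) ->
  polyfun N (fun s => \sum_(t : I) c t s * (e t == k)%:R).
Proof.
move=> hc; apply: polyfun_sum => t.
by apply: polyfunM => //; exact: polyfun_cst.
Qed.

(* Induction on [N]: some coefficient in the head variable is nonzero at the
   tail of [s0], and wherever it is nonzero the integrand differs from its
   value off [{f <> 0}] only at the finitely many roots in the head variable. *)
Lemma gauss_iter_ge1 N (f : seq R -> R) (g : seq R -> \bar R) s0 :
  polyfun N f -> size s0 = N -> f s0 != 0 ->
  (forall s, 0 <= g s)%E -> (forall s, f s != 0 -> (1 <= g s)%E) ->
  (1 <= gauss_iter N g)%E.
Proof.
elim: N f g s0 => [|N IH] f g [|x0 s0] //=; first by move=> _ _ f0 _; apply.
move=> [I [c [e [hc E]]]] [sz] f0 g0 g1.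
rewrite E in f0; have [k ck] := terms_coef_neq0 f0.
apply: (IH _ _ s0 (polyfun_coef_terms e k hc) sz ck).
  by move=> s; apply: integral_ge0 => x _; exact: g0.
move=> s /terms_neq0_off_seq [rs Hrs].
apply: (integral_ge1_off_seq (rs := rs)) => // x xr.
by apply: g1; rewrite E; exact: Hrs.
Qed.

Lemma gauss_iter_le0 N (f : seq R -> R) (g : seq R -> \bar R) s0 :
  polyfun N f -> size s0 = N -> f s0 != 0 ->
  (forall s, 0 <= g s <= 1)%E -> (forall s, f s != 0 -> g s = 0%E) ->
  (gauss_iter N g <= 0)%E.
Proof.
elim: N f g s0 => [|N IH] f g [|x0 s0] //=; first by move=> _ _ f0 _ ->.
move=> [I [c [e [hc E]]]] [sz] f0 g01 g0.
rewrite E in f0; have [k ck] := terms_coef_neq0 f0.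
apply: (IH _ _ s0 (polyfun_coef_terms e k hc) sz ck).
  move=> s; apply/andP; split; last exact: integral_le1.
  by apply: integral_ge0 => x _; have /andP[] := g01 (x :: s).
move=> s /terms_neq0_off_seq [rs Hrs]; apply/eqP; rewrite eq_le; apply/andP; split.
  apply: (integral_le0_off_seq (rs := rs)) => // x xr.
  by apply: g0; rewrite E; exact: Hrs.
by apply: integral_ge0 => x _; have /andP[] := g01 (x :: s).
Qed.

End GaussianGenericity.

Section GramBound.
Variables (R : realType) (m n l : nat).

Definition gram_mx (T : tensor R m n l) : 'M[R]_l :=
  \matrix_(k < l, k' < l) \sum_(i < m) \sum_(j < n) T i j k * T i j k'.

Lemma rank_gram_le (T : tensor R m n l) r : rank_le T r -> (\rank (gram_mx T) <= r)%N.
Proof.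
move=> [a [b [c Tabc]]].
pose C : 'M[R]_(r, l) := \matrix_(p, k) c p k.
pose H : 'M[R]_r :=
  \matrix_(p, q) \sum_(i < m) \sum_(j < n) (a p i * b p j) * (a q i * b q j).
have sum4 (G : 'I_m -> 'I_n -> 'I_r -> 'I_r -> R) :
    \sum_i \sum_j \sum_p \sum_q G i j p q = \sum_p \sum_q \sum_i \sum_j G i j p q.
  under eq_bigr => i _ do rewrite exchange_big.
  under eq_bigr => i _ do under eq_bigr => p _ do rewrite exchange_big.
  by rewrite exchange_big; under eq_bigr => p _ do rewrite exchange_big.
have -> : gram_mx T = C^T *m (H *m C).
  apply/matrixP => k k'; rewrite !mxE.
  under eq_bigr => i _ do under eq_bigr => j _ do rewrite !Tabc big_distrlr /=.
  rewrite sum4; apply: eq_bigr => p _.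
  rewrite !mxE mulr_sumr; apply: eq_bigr => q _.
  rewrite !mxE mulr_suml mulr_sumr; apply: eq_bigr => i _.
  rewrite mulr_suml mulr_sumr; apply: eq_bigr => j _.
  ring.
exact: leq_trans (mxrankM_maxl _ _) (rank_leq_col _).
Qed.

Lemma rank_ge_gram (T : tensor R m n l) r :
  \det (gram_mx T) != 0 -> rank_le T r -> (l <= r)%N.
Proof.
by move=> dG /rank_gram_le; rewrite mxrank_unit // unitmxE unitfE.
Qed.

(* [v G v^T] is the sum of the squares of the contractions [<v, T_ij>]. *)
Lemma gram_det_neq0 (T : tensor R m n l) :
  (forall v : 'I_l -> R, (forall i j, \sum_k v k * T i j k = 0) -> forall k, v k = 0) ->
  \det (gram_mx T) != 0.
Proof.
move=> Tfree; apply/negP => /det0P [v v0 vG].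
pose u i j := \sum_k v 0 k * T i j k.
have u2 : \sum_i \sum_j u i j ^+ 2 = 0.
  have vGv : \sum_k' (v *m gram_mx T) 0 k' * v 0 k' = 0.
    by rewrite vG big1 // => k _; rewrite mxE mul0r.
  rewrite -[RHS]vGv; symmetry; under eq_bigr => k' _ do rewrite mxE mulr_suml.
  under eq_bigr => k' _ do under eq_bigr => k _ do rewrite mxE mulr_sumr mulr_suml.
  under [RHS]eq_bigr => i _ do under eq_bigr => j _ do rewrite expr2 big_distrlr /=.
  rewrite exchange_big /=; under eq_bigr => k _ do rewrite exchange_big /=.
  rewrite exchange_big /=; apply: eq_bigr => i _.
  under eq_bigr => k _ do under eq_bigr => k' _ do rewrite mulr_sumr mulr_suml.
  under eq_bigr => k _ do rewrite exchange_big /=.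
  rewrite exchange_big /=; apply: eq_bigr => j _.
  by apply: eq_bigr => k _; apply: eq_bigr => k' _; ring.
have u0 i j : u i j = 0.
  move/psumr_eq0P: u2 => /(_ (fun i _ => sumr_ge0 _ (fun j _ => sqr_ge0 (u i j)))) /(_ i isT).
  move/psumr_eq0P => /(_ (fun j _ => sqr_ge0 (u i j))) /(_ j isT).
  by move/eqP; rewrite sqrf_eq0 => /eqP.
by apply: (negP v0); apply/eqP/rowP => k; rewrite mxE; exact: Tfree u0 k.
Qed.

End GramBound.

Section AdjugateKernel.
Variables (F : fieldType) (l' : nat).
Local Notation l := l'.+1.

Lemma row_adj_lastcol (A : 'M[F]_l) (r : 'I_l) : r != ord_max ->
  \sum_k A r k * \adj A k ord_max = 0.
Proof.
move=> rn; have := congr1 (fun B : 'M[F]_l => B r ord_max) (mul_mx_adj A).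
by rewrite !mxE (negbTE rn) mulr0n.
Qed.

(* When the first [l - 1] rows of [B] have a one-dimensional kernel, spanned
   by [v], the last column of the adjugate is a NONZERO multiple of [v]: if it
   vanished, replacing the last row by a unit vector at a support point of [v]
   would give a singular matrix whose kernel contradicts the spanning. *)
Lemma adj_lastcol_span (B : 'M[F]_l) (v : 'I_l -> F) (js : 'I_l) : v js != 0 ->
  (forall c : 'I_l -> F, (forall r : 'I_l, r != ord_max -> \sum_k B r k * c k = 0) ->
     exists t, forall k, c k = t * v k) ->
  exists2 t, t != 0 & forall k, \adj B k ord_max = t * v k.
Proof.
move=> vjs Hker.
have [t Ht] := Hker (fun k => \adj B k ord_max) (fun r rn => row_adj_lastcol B rn).
exists t => //; apply/negP => /eqP t0.
pose B' : 'M[F]_l := \matrix_(r, k) if r == ord_max then (k == js)%:R else B r k.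
have cofE : cofactor B' ord_max js = cofactor B ord_max js.
  rewrite /cofactor; congr (_ * \det _); apply/matrixP => a b.
  by rewrite !mxE eq_sym (negbTE (neq_lift _ _)).
have dB' : \det B' = 0.
  rewrite (expand_det_row _ ord_max) (bigD1 js) //= big1.
    rewrite mxE eqxx eqxx mul1r addr0 cofE.
    by have := Ht js; rewrite t0 mul0r mxE.
  by move=> k kn; rewrite mxE eqxx (negbTE kn) mul0r.
have /det0P [y y0 yB] : \det B'^T == 0 by rewrite det_tr dB'.
have yker : forall r : 'I_l, r != ord_max -> \sum_k B r k * y 0 k = 0.
  move=> r rn; have := congr1 (fun M : 'rV[F]_l => M 0 r) yB.
  rewrite !mxE => yBr; rewrite -[RHS]yBr.
  by apply: eq_bigr => k _; rewrite !mxE (negbTE rn); ring.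
have [t' Ht'] := Hker (fun k => y 0 k) yker.
have yjs : y 0 js = 0.
  have := congr1 (fun M : 'rV[F]_l => M 0 ord_max) yB; rewrite !mxE.
  rewrite (bigD1 js) //= big1 ?addr0; last first.
    by move=> k kn; rewrite !mxE eqxx (negbTE kn) mulr0.
  by rewrite !mxE !eqxx mulr1 => ->.
have t'0 : t' = 0.
  by move: yjs; rewrite Ht' => /eqP; rewrite mulf_eq0 (negbTE vjs) orbF => /eqP.
apply: (negP y0); apply/eqP/rowP => k; rewrite mxE.
by have := Ht' k; rewrite t'0 mul0r.
Qed.

Lemma det_neq0_rows_free (C : 'M[F]_l) (v : 'I_l -> 'I_l -> F) :
  (forall p, exists2 t, t != 0 & forall k, C p k = t * v p k) ->
  (forall w : 'I_l -> F, (forall k, \sum_p w p * v p k = 0) -> forall p, w p = 0) ->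
  \det C != 0.
Proof.
move=> Cv vfree; apply/negP => /det0P [w w0 wC].
have [t Ht] : exists t : 'I_l -> F, forall p, t p != 0 /\ forall k, C p k = t p * v p k.
  suff /choice [t Ht] : forall p, exists t, t != 0 /\ forall k, C p k = t * v p k.
    by exists t.
  by move=> p; have [t t0 Ht] := Cv p; exists t.
have wt0 := vfree (fun p => w 0 p * t p).
apply: (negP w0); apply/eqP/rowP => p; rewrite mxE.
have [tp _] := Ht p; apply/eqP; rewrite -(mulIr_eq0 _ (mulIf tp)).
apply/eqP; apply: wt0 => k.
have := congr1 (fun M : 'rV[F]_l => M 0 k) wC; rewrite !mxE => wCk.
rewrite -[RHS]wCk; apply: eq_bigr => q _; have [_ ->] := Ht q; ring.
Qed.

End AdjugateKernel.

Section RankUpperBound.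
Variables (R : realType) (m' n' l' : nat).
Local Notation m := m'.+1.
Local Notation n := n'.+1.
Local Notation l := l'.+1.
Hypothesis lt_slices_l : (m' * n < l)%N.
Variables (x : nat -> nat -> R) (piv : nat -> nat) (J : nat -> nat -> nat).
Hypothesis x_piv : forall p : 'I_l, (piv p < m)%N /\ x p (piv p) = 1.

Definition tentry (T : tensor R m n l) (i j : nat) (k : 'I_l) : R :=
  T (inord i) (inord j) k.

(* Row [i' * n + j] (for [i' < m']) is the fibre [T_(i,j)] minus [x p i]
   times [T_(piv p, j)], where [i = bump (piv p) i'] ranges over the
   indices other than [piv p]; the next rows are the unit vectors at the
   coordinates [J p t], and the last row is irrelevant to the adjugate's
   last column. *)
Definition constraint_mx (T : tensor R m n l) (p : nat) : 'M[R]_l :=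
  \matrix_(r < l, k < l)
  if (r < m' * n)%N then
    tentry T (bump (piv p) (r %/ n)) (r %% n) k
     - x p (bump (piv p) (r %/ n)) * tentry T (piv p) (r %% n) k
  else if (r < l')%N then ((k : nat) == J p (r - m' * n))%:R else 0.

Definition annihilator_mx (T : tensor R m n l) : 'M[R]_l :=
  \matrix_(p < l, k < l) \adj (constraint_mx T p) k ord_max.

Lemma constraint_row_fibre T (p : 'I_l) i j : (i < m)%N -> (j < n)%N -> i != piv p ->
  exists2 r : 'I_l, r != ord_max & forall k,
    constraint_mx T p r k = tentry T i j k - x p i * tentry T (piv p) j k.
Proof.
move=> im jn ip; have [pm _] := x_piv p.
have ui : (unbump (piv p) i < m')%N.
  by move: im pm ip; rewrite /unbump; case: ltnP => /= ? ? ? /eqP; lia.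
have rm : (unbump (piv p) i * n + j < m' * n)%N.
  by move: jn ui; set u := unbump _ _; nia.
have rl := ltn_trans rm lt_slices_l.
exists (Ordinal rl).
  by apply/eqP => /(congr1 val) /= rE; move: lt_slices_l rm; rewrite rE; lia.
move=> k; rewrite mxE /= rm divnMDl // divn_small // addn0 modnMDl modn_small //.
by rewrite unbumpK //= inE eq_sym.
Qed.

Lemma constraint_row_unit T (p : 'I_l) t (tl : (m' * n + t < l')%N) :
  exists2 r : 'I_l, r != ord_max &
    forall k, constraint_mx T p r k = ((k : nat) == J p t)%:R.
Proof.
have rl : (m' * n + t < l)%N by apply: ltn_trans tl _.
exists (Ordinal rl); first by apply/eqP => /(congr1 val) /= rE; move: tl; rewrite rE ltnn.
move=> k; rewrite mxE /= tl addKn ifF //.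
by apply/negbTE; rewrite -leqNgt leq_addr.
Qed.

Section Kernel.
Variables (T : tensor R m n l) (p : 'I_l) (c : 'I_l -> R).
Hypothesis c_ker : forall r : 'I_l, r != ord_max -> \sum_k constraint_mx T p r k * c k = 0.

Lemma kernel_fibre i j : (i < m)%N -> (j < n)%N ->
  \sum_k c k * tentry T i j k = x p i * \sum_k c k * tentry T (piv p) j k.
Proof.
move=> im jn; have [_ xp1] := x_piv p.
have [ip|ip] := eqVneq i (piv p); first by rewrite ip xp1 mul1r.
have [r rn Br] := constraint_row_fibre T im jn ip.
apply/eqP; rewrite -subr_eq0 mulr_sumr -sumrB; apply/eqP.
by rewrite -[RHS](c_ker rn); apply: eq_bigr => k _; rewrite Br; ring.
Qed.

Lemma kernel_unit t : (m' * n + t < l')%N -> \sum_(k < l) c k * ((k : nat) == J p t)%:R = 0.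
Proof.
move=> tl; have [r rn Br] := constraint_row_unit T p tl.
by rewrite -[RHS](c_ker rn); apply: eq_bigr => k _; rewrite Br mulrC.
Qed.

End Kernel.

Lemma rank_le_annihilator T : \det (annihilator_mx T) != 0 -> rank_le T l.
Proof.
move=> dC; have Cu : annihilator_mx T \in unitmx by rewrite unitmxE unitfE.
set C := annihilator_mx T; set D := invmx C.
have Cfibre (p : 'I_l) (i : 'I_m) (j : 'I_n) :
    \sum_k C p k * T i j k = x p i * \sum_k C p k * tentry T (piv p) j k.
  rewrite -(kernel_fibre (c := fun k => C p k)) //.
    by apply: eq_bigr => k _; rewrite /tentry !inord_val.
  move=> r rn; rewrite -[RHS](row_adj_lastcol (constraint_mx T p) rn).
  by apply: eq_bigr => k _; rewrite [C _ _]mxE.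
exists (fun p i => x p i), (fun p j => \sum_k C p k * tentry T (piv p) j k),
  (fun p k => D k p) => i j k.
have DC k' : \sum_p D k p * C p k' = (k == k')%:R.
  by move: (congr1 (fun B : 'M[R]_l => B k k') (mulVmx Cu)); rewrite !mxE.
transitivity (\sum_p D k p * \sum_k' C p k' * T i j k').
  under eq_bigr => p _ do rewrite mulr_sumr.
  rewrite exchange_big /=.
  under eq_bigr => k' _ do under eq_bigr => p _ do rewrite mulrA.
  under eq_bigr => k' _ do rewrite -mulr_suml DC.
  rewrite (bigD1 k) //= eqxx mul1r big1 ?addr0 // => k' /negbTE.
  by rewrite eq_sym => ->; rewrite mul0r.
by apply: eq_bigr => p _; rewrite Cfibre; ring.
Qed.

End RankUpperBound.

Lemma big_nat_single (R : zmodType) (F : nat -> R) a b i0 : (a <= i0 < b)%N ->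
  (forall i, (a <= i < b)%N -> i != i0 -> F i = 0) ->
  \sum_(a <= i < b) F i = F i0.
Proof.
move=> i0ab F0; rewrite (bigD1_seq i0) ?mem_index_iota ?iota_uniq //= big1_seq ?addr0 //.
by move=> i /andP [ii0]; rewrite mem_index_iota => iab; exact: F0.
Qed.

Lemma big_nat_blocks (R : zmodType) (F : nat -> R) a n k :
  \sum_(a <= p < a + k * n) F p = \sum_(i < k) \sum_(j < n) F (a + i * n + j)%N.
Proof.
elim: k => [|k IH]; first by rewrite mul0n addn0 big_geq // big_ord0.
rewrite big_ord_recr /= -IH (@big_cat_nat _ _ _ (a + k * n)) /=; last first.
    by rewrite leq_add2l leq_mul2r leqnSn orbT.
  by rewrite leq_addr.
congr (_ + _); rewrite -{1}[(a + k * n)%N]add0n big_addn.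
have -> : (a + k.+1 * n - (a + k * n) = n)%N by rewrite mulSnr addnA addKn.
by rewrite big_mkord; apply: eq_bigr => j _; congr F; lia.
Qed.

(* A Vandermonde argument: [X * \prod_(j' != j) (X - z j')] has no constant
   term, so its value is a combination of the vanishing power sums. *)
Lemma power_sums_vanish (F : fieldType) (js : seq nat) (z W : nat -> F) : uniq js ->
  {in js &, injective z} -> (forall j, j \in js -> z j != 0) ->
  (forall t, (1 <= t <= size js)%N -> \sum_(j <- js) W j * z j ^+ t = 0) ->
  forall j, j \in js -> W j = 0.
Proof.
move=> ujs zinj z0 Hs j1 j1s.
pose Q := \prod_(j <- js | j != j1) ('X - (z j)%:P); pose L := 'X * Q.
have sQ : (size Q <= size js)%N.
  rewrite /Q -big_filter size_prod_XsubC -rem_filter // size_rem // ltn_predL.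
  by case: (js) j1s.
have sL : (size L <= (size js).+1)%N.
  by apply: leq_trans (size_mul_leq _ _) _; rewrite size_polyX.
have L0 : L`_0 = 0 by rewrite coefXM eqxx.
have HL : \sum_(j <- js) W j * L.[z j] = 0.
  under eq_bigr => j _ do rewrite (horner_coef_wide _ sL) mulr_sumr.
  rewrite exchange_big /= big1 // => t _.
  under eq_bigr => j _ do rewrite mulrCA.
  rewrite -mulr_sumr; case: (posnP t) => [->|tp]; first by rewrite L0 mul0r.
  by rewrite Hs ?mulr0 // tp -ltnS ltn_ord.
move: HL; rewrite (bigD1_seq j1) //= big1_seq ?addr0; last first.
  move=> j /andP [jn jj]; rewrite /L hornerM /Q horner_prod.
  rewrite -big_filter (bigD1_seq j) //=; last by rewrite filter_uniq.
    by rewrite hornerXsubC subrr mul0r !mulr0.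
  by rewrite mem_filter jn.
move/eqP; rewrite mulf_eq0 => /orP [/eqP //|].
rewrite /L hornerM hornerX mulf_eq0 (negbTE (z0 _ j1s)) /= /Q horner_prod.
rewrite prodf_seq_eq0 => /hasP [j jj /andP [jn]]; rewrite hornerXsubC subr_eq0 => /eqP E.
by case/eqP: jn; apply: zinj.
Qed.

Section Witness.
Variables (R : realType) (m' n' l' : nat).
Local Notation m := m'.+1.
Local Notation n := n'.+1.
Local Notation l := l'.+1.
Hypothesis lt_slices_l : (m' * n < l)%N.
Hypothesis lt_l_mn : (l < m * n)%N.

(* [l = m' * n + excess]: coordinates below [excess] belong to the slice
   [i = 0], the remaining ones are the slots [slot i j], [1 <= i < m], [j < n]. *)
Definition excess := (l - m' * n)%N.
Definition slot (i j : nat) := (excess + (i - 1) * n + j)%N.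
Definition slot_row (k : nat) := ((k - excess) %/ n + 1)%N.
Definition slot_col (k : nat) := ((k - excess) %% n)%N.

Lemma excess_gt0 : (0 < excess)%N. Proof. by rewrite subn_gt0. Qed.
Lemma excess_le : (excess <= n')%N.
Proof. by move: lt_l_mn lt_slices_l; rewrite /excess; nia. Qed.
Lemma lE : l = (m' * n + excess)%N. Proof. by rewrite subnKC // ltnW. Qed.
Lemma l'E : l' = (m' * n + excess.-1)%N. Proof. by have := lE; have := excess_gt0; lia. Qed.

Lemma slot_lt i j : (1 <= i < m)%N -> (j < n)%N -> (slot i j < l)%N.
Proof.
move=> /andP [i1 im] jn; rewrite lE /slot.
have : ((i - 1) * n + n <= m' * n)%N by rewrite -mulSnr leq_mul2r; apply/orP; right; lia.
lia.
Qed.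

Lemma slot_ge i j : (excess <= slot i j)%N. Proof. by rewrite /slot -addnA leq_addr. Qed.

Lemma slot_rowK i j : (1 <= i)%N -> (j < n)%N -> slot_row (slot i j) = i.
Proof.
move=> i1 jn; rewrite /slot_row /slot -addnA addKn divnMDl // divn_small // addn0.
lia.
Qed.

Lemma slot_colK i j : (j < n)%N -> slot_col (slot i j) = j.
Proof. by move=> jn; rewrite /slot_col /slot -addnA addKn modnMDl modn_small. Qed.

Lemma slotK k : (excess <= k)%N -> slot (slot_row k) (slot_col k) = k.
Proof. by move=> ek; rewrite /slot /slot_row /slot_col addnK -addnA -divn_eq; lia. Qed.

Lemma slot_row_bound k : (excess <= k)%N -> (k < l)%N -> (1 <= slot_row k < m)%N.
Proof.
move=> ek kl; rewrite /slot_row addn1 /=.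
by rewrite ltnS ltn_divLR //; move: kl; rewrite lE; lia.
Qed.

Lemma slot_col_bound k : (slot_col k < n)%N. Proof. by rewrite ltn_mod. Qed.

Lemma slot_inj i j i2 j2 : (1 <= i)%N -> (j < n)%N -> (1 <= i2)%N -> (j2 < n)%N ->
  slot i j = slot i2 j2 -> i = i2 /\ j = j2.
Proof.
move=> i1 jn i21 j2n E.
split; first by rewrite -(slot_rowK i1 jn) E slot_rowK.
by rewrite -(slot_colK i jn) E slot_colK.
Qed.

(* The columns split into [K = {1, .., excess - 1} U {n'}], enumerated by
   [K_enum], and the chain [0, excess, excess + 1, .., n' - 1] of the
   remaining columns, along which [chain_pred] steps back and [depth] counts
   the position (starting at 1). *)
Definition inK (j : nat) := ((0 < j)%N && (j < excess)%N) || (j == n').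
Definition K_enum (u : nat) := if (u < excess.-1)%N then u.+1 else n'.
Definition K_index (j : nat) := if (j < excess)%N then j.-1 else excess.-1.
Definition chain_pred (j : nat) := if j == excess then 0%N else j.-1.
Definition depth (j : nat) := if j == 0%N then 1%N else (j - excess + 2)%N.

Lemma K_index_bound j : (K_index j < excess)%N.
Proof. by have := excess_gt0; rewrite /K_index; case: ifP; lia. Qed.

Lemma K_indexK j : inK j -> K_enum (K_index j) = j.
Proof.
have := excess_le; have := excess_gt0.
rewrite /inK /K_enum /K_index => e1 e2 /orP [/andP [j0 je]|/eqP ->].
  by rewrite je; case: ifP; lia.
by rewrite (_ : (n' < excess)%N = false) ?ltnn //; apply/negbTE; rewrite -leqNgt.
Qed.

Lemma K_index_inj j j2 : inK j -> inK j2 -> K_index j = K_index j2 -> j = j2.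
Proof. by move=> H1 H2 E; rewrite -(K_indexK H1) E K_indexK. Qed.

Lemma notK0 : ~~ inK 0.
Proof. by rewrite /inK ltnn /=; apply/eqP; have := excess_le; have := excess_gt0; lia. Qed.

Lemma notK_cases j : (j < n)%N -> ~~ inK j -> j = 0%N \/ (excess <= j < n')%N.
Proof.
have := excess_le; have := excess_gt0; rewrite /inK => e1 e2 jn.
rewrite negb_or negb_and -!leqNgt => /andP [/orP [j0|je] jn']; first by left; lia.
by right; apply/andP; split => //; move: jn'; lia.
Qed.

Lemma chain_pred_surj j : (j < n)%N -> ~~ inK j ->
  exists j2, [/\ (excess <= j2)%N, (j2 < n)%N & chain_pred j2 = j].
Proof.
move=> jn /(notK_cases jn) [->|/andP [H1 H2]].
  by exists excess; split => //; [exact: excess_le|rewrite /chain_pred eqxx].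
exists j.+1; split; [lia|lia|].
by rewrite /chain_pred; case: ifP => //; move/eqP; lia.
Qed.

Lemma chain_pred_bound j : (excess <= j)%N -> (j < n)%N ->
  (chain_pred j < n)%N /\ ~~ inK (chain_pred j).
Proof.
have := excess_le; have := excess_gt0; rewrite /chain_pred /inK => e1 e2 ej jn.
case: ifP => [_|/eqP H]; first by split => //; rewrite ltnn /=; apply/eqP; lia.
split; first lia.
rewrite negb_or; apply/andP; split; last by apply/eqP; lia.
by rewrite negb_and -!leqNgt; apply/orP; right; lia.
Qed.

Lemma chain_pred_lt j : (excess <= j)%N -> (chain_pred j < j)%N.
Proof. by have := excess_gt0; rewrite /chain_pred => e1 ej; case: ifP => _; lia. Qed.

Lemma depth_inj j j' : (j < n)%N -> ~~ inK j -> (j' < n)%N -> ~~ inK j' ->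
  depth j = depth j' -> j = j'.
Proof.
move=> jn jk j'n j'k; rewrite /depth; have e1 := excess_gt0.
move: (notK_cases jn jk) (notK_cases j'n j'k) => [->|/andP [a b]] [->|/andP [c d]] //.
- by rewrite eqxx ifF; [lia|apply/negbTE/eqP; lia].
- by rewrite eqxx ifF; [lia|apply/negbTE/eqP; lia].
- by rewrite !ifF; [lia|apply/negbTE/eqP; lia|apply/negbTE/eqP; lia].
Qed.

(* Slice [0] ties each chain column to its predecessor in all slices [i >= 1]. *)
Definition witness_entry (i j k : nat) : R :=
  if i == 0%N then
    if (j < excess)%N then (k == j)%:R
    else \sum_(1 <= i' < m) (k == slot i' (chain_pred j))%:R
  else (k == slot i j)%:R.
Definition witness : tensor R m n l := fun i j k => witness_entry i j k.

(* The distinct weights [depth] in the chain case make the vectors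
   [kernel_vec p] below free, by a Vandermonde argument. *)
Definition witness_x (p i : nat) : R :=
  if (p < excess)%N then (i == 0%N)%:R
  else if inK (slot_col p) then (i == slot_row p)%:R
  else (i == 0%N)%:R + (depth (slot_col p))%:R * (i == slot_row p)%:R.
Definition witness_piv (p : nat) : nat :=
  if (p < excess)%N then 0%N else if inK (slot_col p) then slot_row p else 0%N.
Definition witness_J (p t : nat) : nat :=
  if (p < excess)%N then bump p t
  else if inK (slot_col p) then slot (slot_row p) (K_enum (bump (K_index (slot_col p)) t))
  else t.+1.

Definition chain_vec (s : R) (j : nat) : R :=
  if j == 0%N then s else if (j < excess)%N then 0 else s ^+ (j - excess + 2).
Definition kernel_vec (p k : nat) : R :=
  if (p < excess)%N then (k == p)%:R
  else if inK (slot_col p) then (k == p)%:R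
  else if (k < excess)%N then (k == 0%N)%:R
  else if slot_row k == slot_row p then chain_vec (depth (slot_col p))%:R (slot_col k)
  else 0.

Lemma witness_x_piv (p : 'I_l) : (witness_piv p < m)%N /\ witness_x p (witness_piv p) = 1.
Proof.
rewrite /witness_piv /witness_x; case: ifP => pe; first by rewrite eqxx.
have pe' : (excess <= p)%N by rewrite leqNgt pe.
have /andP [s1 s2] := slot_row_bound pe' (ltn_ord p).
case: ifP => pk; first by rewrite eqxx.
by split => //; rewrite eqxx eq_sym (_ : (slot_row p == 0%N) = false) ?mulr0 ?addr0 //; lia.
Qed.

(* Witness coordinates are natural numbers; [extend c] is [0] beyond [l]. *)
Definition extend (c : 'I_l -> R) (k : nat) : R := if (k < l)%N then c (inord k) else 0.

Lemma extend_ord c (k : 'I_l) : extend c k = c k.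
Proof. by rewrite /extend ltn_ord inord_val. Qed.

Lemma sum_unit_extend c a : \sum_(k < l) c k * ((k : nat) == a)%:R = extend c a.
Proof.
rewrite /extend; case: ifP => al.
  rewrite (bigD1 (inord a)) //= inordK // eqxx mulr1 big1 ?addr0 // => k kn.
  suff -> : ((k : nat) == a) = false by rewrite mulr0.
  by apply/negbTE; apply: contra kn => /eqP <-; rewrite inord_val.
rewrite big1 // => k _; suff -> : ((k : nat) == a) = false by rewrite mulr0.
by apply/negbTE/eqP => ka; move: al; rewrite -ka ltn_ord.
Qed.

Definition witness_contract (f : nat -> R) (i j : nat) : R :=
  if i == 0%N then
    if (j < excess)%N then f j else \sum_(1 <= i' < m) f (slot i' (chain_pred j))
  else f (slot i j).

Lemma sum_witness_tentry c i j : (i < m)%N -> (j < n)%N ->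
  \sum_k c k * tentry witness i j k = witness_contract (extend c) i j.
Proof.
move=> im jn; under eq_bigr => k _ do rewrite /tentry /witness !inordK //.
rewrite /witness_entry /witness_contract; case: (i == 0%N); last exact: sum_unit_extend.
case: ifP => _; first exact: sum_unit_extend.
under eq_bigr => k _ do rewrite mulr_sumr.
by rewrite exchange_big /=; apply: eq_big_nat => i' _; exact: sum_unit_extend.
Qed.

(* [f] is a kernel vector of the constraint rows of [p], in the coordinates
   given by [witness_contract] and [witness_J]. *)
Section KernelCases.
Variables (p : 'I_l) (f : nat -> R).
Hypothesis slice_rel : forall i j, (i < m)%N -> (j < n)%N -> i != witness_piv p ->
  witness_contract f i j = witness_x p i * witness_contract f (witness_piv p) j.
Hypothesis unit_rel : forall t, (t < excess.-1)%N -> f (witness_J p t) = 0.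

Lemma kernel_span_low : (p < excess)%N ->
  forall k, (k < l)%N -> f k = f p * kernel_vec p k.
Proof.
move=> pe k kl.
have slots0 i j : (1 <= i < m)%N -> (j < n)%N -> f (slot i j) = 0.
  case/andP=> i1 im jn; have := slice_rel im jn.
  rewrite /witness_contract /witness_piv /witness_x pe /= (_ : (i == 0%N) = false); last by lia.
  by rewrite mul0r; apply; lia.
rewrite /kernel_vec pe; case: (eqVneq k p) => [->|kp]; first by rewrite mulr1.
rewrite mulr0; case: (ltnP k excess) => ke; last first.
  by rewrite -(slotK ke); apply: slots0; [exact: slot_row_bound|exact: slot_col_bound].
have := @unit_rel (unbump p k); rewrite /witness_J pe unbumpK ?inE //; apply.
by move: ke kp pe; rewrite /unbump; case: ltnP => ? /eqP ? ?; lia.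
Qed.

Section SlotPivot.
Hypothesis pe : (excess <= p)%N.
Local Notation i0 := (slot_row p).
Local Notation j0 := (slot_col p).

Lemma pivot_row_bound : (1 <= i0 < m)%N.
Proof. exact: slot_row_bound pe (ltn_ord p). Qed.

Lemma pivot_not_low : (p < excess)%N = false.
Proof. by rewrite ltnNge pe. Qed.

Lemma kernel_span_K : inK j0 -> forall k, (k < l)%N -> f k = f p * kernel_vec p k.
Proof.
move=> pK; have /andP [r1 rm] := pivot_row_bound.
have pivE : witness_piv p = i0 by rewrite /witness_piv pivot_not_low pK.
have xE i : witness_x p i = (i == i0)%:R by rewrite /witness_x pivot_not_low pK.
have rows0 i j : (1 <= i < m)%N -> i != i0 -> (j < n)%N -> f (slot i j) = 0.
  case/andP=> i1 im ii jn; have := slice_rel im jn; rewrite pivE xE (negbTE ii).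
  by rewrite /witness_contract mul0r (_ : (i == 0%N) = false); [apply|lia].
have low0 j : (j < excess)%N -> f j = 0.
  move=> je; have jn : (j < n)%N by have := excess_le; lia.
  have := slice_rel (ltn0Sn _) jn; rewrite pivE xE /witness_contract eqxx je.
  by rewrite (_ : (0 == i0)%N = false) ?mul0r; [apply; lia|lia].
have chain0 j : (excess <= j)%N -> (j < n)%N -> f (slot i0 (chain_pred j)) = 0.
  move=> ej jn; have [predn _] := chain_pred_bound ej jn.
  have := slice_rel (ltn0Sn _) jn; rewrite pivE xE /witness_contract eqxx ltnNge ej /=.
  rewrite (_ : (0 == i0)%N = false) ?mul0r; last by lia.
  rewrite (big_nat_single (i0 := i0)) ?r1 //; first by apply; lia.
  by move=> i /andP [i1 im] ii; apply: rows0; rewrite ?i1.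
move=> k kl; rewrite /kernel_vec pivot_not_low pK.
case: (eqVneq k p) => [->|kp]; first by rewrite mulr1.
rewrite mulr0; case: (ltnP k excess) => ke; first exact: low0.
have /andP [k1 km] := slot_row_bound ke kl.
rewrite -(slotK ke); case: (eqVneq (slot_row k) i0) => ki; last first.
  by apply: rows0; rewrite ?k1 ?slot_col_bound.
have kj : slot_col k != j0 by apply: contra kp => /eqP kj; rewrite -(slotK ke) ki kj slotK.
rewrite ki; case: (boolP (inK (slot_col k))) => kK; last first.
  by have [j2 [e2 n2 <-]] := chain_pred_surj (slot_col_bound k) kK; exact: chain0.
have kv : K_index (slot_col k) != K_index j0.
  by apply: contra kj => /eqP E; apply/eqP; exact: K_index_inj.
have := @unit_rel (unbump (K_index j0) (K_index (slot_col k))).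
rewrite /witness_J pivot_not_low pK unbumpK ?inE // K_indexK //; apply.
have := K_index_bound (slot_col k); have := K_index_bound j0.
by move: kv; rewrite /unbump; case: ltnP => ? /eqP ? ? ?; lia.
Qed.

Section ChainPivot.
Hypothesis pK : ~~ inK j0.
Local Notation s := ((depth j0)%:R : R).

Lemma chain_pivot_piv : witness_piv p = 0%N.
Proof. by rewrite /witness_piv pivot_not_low (negbTE pK). Qed.

Lemma chain_pivot_x i : witness_x p i = (i == 0%N)%:R + s * (i == i0)%:R.
Proof. by rewrite /witness_x pivot_not_low (negbTE pK). Qed.

Lemma chain_pivot_rows0 i j : (1 <= i < m)%N -> i != i0 -> (j < n)%N -> f (slot i j) = 0.
Proof.
case/andP=> i1 im ii jn; have := slice_rel im jn.
rewrite chain_pivot_piv chain_pivot_x (negbTE ii) /witness_contract.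
by rewrite (_ : (i == 0%N) = false) ?mulr0 ?addr0 ?mul0r; [apply; lia|lia].
Qed.

Lemma chain_pivot_low0 t : (t < excess.-1)%N -> f t.+1 = 0.
Proof.
by move=> tl; have := unit_rel tl; rewrite /witness_J pivot_not_low (negbTE pK).
Qed.

(* Along the chain, each slot of the pivot row is [s] times the previous one,
   so the pivot row is [f 0] times the powers of [s] in [chain_vec]. *)
Lemma chain_pivot_slot j : (j < n)%N -> f (slot i0 j) = f 0%N * chain_vec s j.
Proof.
have /andP [r1 rm] := pivot_row_bound; have e1 := excess_gt0.
have pivot_rel j' : (j' < n)%N -> f (slot i0 j') =
    s * (if (j' < excess)%N then f j' else \sum_(1 <= i' < m) f (slot i' (chain_pred j'))).
  move=> jn; have := slice_rel rm jn; rewrite chain_pivot_piv chain_pivot_x eqxx.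
  rewrite /witness_contract (_ : (i0 == 0%N) = false) ?add0r ?mulr1; [apply; lia|lia].
elim: j {-2}j (leqnn j) => [|j' IH] j.
  by rewrite leqn0 => /eqP -> _; rewrite pivot_rel // e1 /chain_vec eqxx; ring.
move=> jj' jn; rewrite pivot_rel // /chain_vec.
have [->|j0'] := eqVneq j 0%N; first by rewrite e1; ring.
case: ifP => je.
  by rewrite (_ : j = j.-1.+1) ?chain_pivot_low0 ?mulr0 //; lia.
have ej : (excess <= j)%N by rewrite leqNgt je.
have [predn _] := chain_pred_bound ej jn.
rewrite (big_nat_single (i0 := i0)) ?r1 //; last first.
  by move=> i /andP [i1 im] ii; apply: chain_pivot_rows0; rewrite ?i1.
rewrite IH //; last by have := chain_pred_lt ej; lia.
rewrite /chain_vec /chain_pred; have [->|jne] := eqVneq j excess.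
  by rewrite eqxx subnn; ring.
rewrite (_ : (j.-1 == 0%N) = false); last by lia.
rewrite (_ : (j.-1 < excess)%N = false); last by lia.
by rewrite (_ : (j - excess + 2 = (j.-1 - excess + 2).+1)%N) ?exprS; [ring|lia].
Qed.

Lemma kernel_span_chain k : (k < l)%N -> f k = f 0%N * kernel_vec p k.
Proof.
move=> kl; rewrite /kernel_vec pivot_not_low (negbTE pK).
case: (ltnP k excess) => ke.
  have [->|k0] := eqVneq k 0%N; first by rewrite mulr1.
  by rewrite mulr0 (_ : k = k.-1.+1) ?chain_pivot_low0 //; lia.
have /andP [k1 km] := slot_row_bound ke kl.
rewrite -(slotK ke) slot_rowK ?slot_col_bound // slot_colK ?slot_col_bound //.
have [ki|ki] := eqVneq (slot_row k) i0; first by rewrite ki chain_pivot_slot ?slot_col_bound.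
by rewrite mulr0; apply: chain_pivot_rows0; rewrite ?k1 ?slot_col_bound.
Qed.

End ChainPivot.

End SlotPivot.
End KernelCases.

Lemma witness_kernel_span (p : 'I_l) (c : 'I_l -> R) :
  (forall r : 'I_l, r != ord_max ->
     \sum_k constraint_mx witness_x witness_piv witness_J witness p r k * c k = 0) ->
  exists t, forall k : 'I_l, c k = t * kernel_vec p k.
Proof.
move=> c_ker.
have slice_rel i j : (i < m)%N -> (j < n)%N -> i != witness_piv p ->
    witness_contract (extend c) i j =
    witness_x p i * witness_contract (extend c) (witness_piv p) j.
  move=> im jn ip; have [pivm _] := witness_x_piv p.
  rewrite -!sum_witness_tentry //.
  exact: (kernel_fibre lt_slices_l witness_x_piv c_ker).
have unit_rel t : (t < excess.-1)%N -> extend c (witness_J p t) = 0.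
  move=> tl; rewrite -sum_unit_extend.
  by apply: (kernel_unit c_ker); rewrite l'E; lia.
suff [t Ht] : exists t, forall k, (k < l)%N -> extend c k = t * kernel_vec p k.
  by exists t => k; rewrite -extend_ord; exact: Ht.
have [pe|pe] := ltnP p excess; first by exists (extend c p); exact: kernel_span_low.
have [pK|pK] := boolP (inK (slot_col p)).
  by exists (extend c p); exact: kernel_span_K.
by exists (extend c 0%N); exact: kernel_span_chain.
Qed.

Lemma sum_slots (F : nat -> R) :
  \sum_(p < l) F p = \sum_(p < excess) F p + \sum_(1 <= i < m) \sum_(j < n) F (slot i j).
Proof.
rewrite -(big_mkord xpredT F) (@big_cat_nat _ _ _ excess) //=; last by rewrite lE leq_addl.
rewrite big_mkord; congr (_ + _).
have -> : l = (excess + m' * n)%N by rewrite lE addnC.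
rewrite big_nat_blocks big_add1 /= big_mkord; apply: eq_bigr => i _.
by apply: eq_bigr => j _; rewrite /slot subn1.
Qed.

Definition chain_cols := 0%N :: index_iota excess n'.

Lemma mem_chain_cols j : (j \in chain_cols) = (j < n)%N && ~~ inK j.
Proof.
have := excess_le; have := excess_gt0 => e1 e2.
rewrite in_cons mem_index_iota; apply/idP/idP.
  case/orP => [/eqP ->|/andP [H1 H2]]; first by rewrite notK0.
  rewrite /inK negb_or negb_and -!leqNgt; apply/and3P; split; [lia|lia|].
  by apply/eqP; lia.
by case/andP => jn /(notK_cases jn) [->|->]; rewrite ?eqxx ?orbT.
Qed.

Lemma uniq_chain_cols : uniq chain_cols.
Proof. by rewrite cons_uniq iota_uniq andbT mem_index_iota; have := excess_gt0; lia. Qed.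

Lemma depth_onto t : (1 <= t <= size chain_cols)%N ->
  exists2 j, j \in chain_cols & depth j = t.
Proof.
rewrite /= size_iota => /andP [t1 tn]; have := excess_gt0 => e1.
have [->|t1'] := eqVneq t 1%N; first by exists 0%N.
exists (t + excess - 2)%N; last by rewrite /depth ifF; [lia|apply/negbTE/eqP; lia].
by rewrite in_cons mem_index_iota; apply/orP; right; lia.
Qed.

Lemma sum_chain_cols (G : nat -> R) :
  \sum_(j < n) (if inK j then 0 else G j) = \sum_(j <- chain_cols) G j.
Proof.
rewrite (bigID (fun j : 'I_n => inK j)) /= big1 ?add0r => [|j ->] //.
rewrite [RHS](perm_big [seq val j | j : 'I_n <- enum 'I_n & ~~ inK j]) /=.
  by rewrite big_map big_filter big_enum_cond /=; apply: eq_bigr => j /negbTE ->.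
apply: uniq_perm; [exact: uniq_chain_cols| |].
  by rewrite map_inj_uniq; [apply: filter_uniq; exact: enum_uniq|exact: ord_inj].
move=> j; rewrite mem_chain_cols; apply/idP/mapP => [/andP [jn jK]|[j' + ->]].
  by exists (Ordinal jn); rewrite // mem_filter jK mem_enum.
by rewrite mem_filter => /andP [jK _]; rewrite ltn_ord.
Qed.

Lemma chain_vec_notK (s : R) j : (j < n)%N -> ~~ inK j -> chain_vec s j = s ^+ depth j.
Proof.
move=> jn /(notK_cases jn) [->|/andP [H1 H2]]; first by rewrite /chain_vec /depth eqxx expr1.
rewrite /chain_vec /depth (_ : (j == 0%N) = false); last by have := excess_gt0; lia.
by rewrite ltnNge H1.
Qed.

Lemma kernel_vec_unit p k : (p < excess)%N || inK (slot_col p) ->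
  kernel_vec p k = (k == p)%:R.
Proof. by rewrite /kernel_vec; case: ltnP => //= _ ->. Qed.

Lemma kernel_vec_chain_slot i j i' j' : (1 <= i)%N -> (j < n)%N ->
  (1 <= i')%N -> (j' < n)%N -> ~~ inK j' ->
  kernel_vec (slot i j) (slot i' j') =
    if inK j then 0 else (i == i')%:R * (depth j)%:R ^+ depth j'.
Proof.
move=> i1 jn i'1 j'n j'K; rewrite /kernel_vec ltnNge slot_ge /= slot_colK //.
case: ifP => jK.
  rewrite (_ : (slot i' j' == slot i j) = false) //; apply/negbTE/eqP.
  by move=> /(slot_inj i'1 j'n i1 jn) [_ j'j]; move: j'K; rewrite j'j jK.
rewrite ltnNge slot_ge /= !slot_rowK // slot_colK // chain_vec_notK // eq_sym.
by case: (i == i'); rewrite ?mul1r ?mul0r.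
Qed.

Section Independence.
Variable w : nat -> R.
Hypothesis w_rel : forall k, (k < l)%N -> \sum_(p < l) w p * kernel_vec p k = 0.

(* Evaluating at the slot [(i, j')] of a chain column [j'] leaves the power
   sums [\sum_j w (slot i j) * depth j ^+ depth j'] of the chain columns. *)
Lemma kernel_vec_free_chain i j : (1 <= i < m)%N -> j \in chain_cols -> w (slot i j) = 0.
Proof.
move=> iim; have /andP [i1 im] := iim; move: j.
apply: (power_sums_vanish (z := fun j => (depth j)%:R) (W := fun j => w (slot i j))).
- exact: uniq_chain_cols.
- move=> j1 j2; rewrite !mem_chain_cols => /andP [j1n j1K] /andP [j2n j2K] /eqP.
  by rewrite eqr_nat => /eqP; exact: (depth_inj j1n j1K j2n j2K).
- by move=> j0 _; rewrite pnatr_eq0 /depth; case: ifP; lia.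
move=> t /depth_onto [j' j'c <-]; move: (j'c); rewrite mem_chain_cols => /andP [j'n j'K].
have := w_rel (slot_lt iim j'n).
rewrite (sum_slots (fun p => w p * kernel_vec p (slot i j'))) big1 ?add0r; last first.
  move=> p _; rewrite kernel_vec_unit ?ltn_ord //.
  suff -> : (slot i j' == p) = false by rewrite mulr0.
  by apply/negbTE; have := slot_ge i j'; have := ltn_ord p; lia.
rewrite (big_nat_single (i0 := i)) ?i1 //; last first.
  move=> i' /andP [i'1 _] i'i; apply: big1 => j _.
  by rewrite kernel_vec_chain_slot // (negbTE i'i); case: ifP; rewrite ?mul0r ?mulr0.
rewrite -sum_chain_cols => sum0; rewrite -[RHS]sum0; apply: eq_bigr => j _.
by rewrite kernel_vec_chain_slot // eqxx mul1r; case: ifP; rewrite ?mulr0.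
Qed.

Lemma kernel_vec_free_nat p : (p < l)%N -> w p = 0.
Proof.
move=> pl.
have chain0 q : (excess <= q)%N -> (q < l)%N -> ~~ inK (slot_col q) -> w q = 0.
  move=> qe ql qK; rewrite -(slotK qe); apply: kernel_vec_free_chain.
    exact: slot_row_bound.
  by rewrite mem_chain_cols slot_col_bound.
have [pc|pu] := boolP ((excess <= p)%N && ~~ inK (slot_col p)).
  by case/andP: pc => pe pK; exact: chain0 pe pl pK.
have := w_rel pl; rewrite (bigD1 (Ordinal pl)) //= kernel_vec_unit; last first.
  by move: pu; rewrite negb_and negbK -ltnNge.
rewrite eqxx mulr1 big1 ?addr0 // => q qp.
have [qc|qu] := boolP ((excess <= q)%N && ~~ inK (slot_col q)).
  by case/andP: qc => qe qK; rewrite (chain0 _ qe (ltn_ord q) qK) mul0r.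
rewrite kernel_vec_unit; last by move: qu; rewrite negb_and negbK -ltnNge.
suff -> : (p == q) = false by rewrite mulr0.
by apply/negbTE; apply: contra qp => /eqP pq; apply/eqP/val_inj.
Qed.

End Independence.

Lemma kernel_vec_free (w : 'I_l -> R) :
  (forall k : 'I_l, \sum_p w p * kernel_vec p k = 0) -> forall p : 'I_l, w p = 0.
Proof.
move=> w_rel p; rewrite -extend_ord; apply: kernel_vec_free_nat => // k kl.
rewrite -[RHS](w_rel (Ordinal kl)).
by apply: eq_bigr => q _; rewrite extend_ord.
Qed.

Lemma witness_gram_det : \det (gram_mx witness) != 0.
Proof.
apply: gram_det_neq0 => v v0 k; rewrite -extend_ord.
have vT i j : (i < m)%N -> (j < n)%N -> witness_contract (extend v) i j = 0.
  move=> im jn; rewrite -sum_witness_tentry // -[RHS](v0 (Ordinal im) (Ordinal jn)).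
  rewrite /tentry; have [-> ->] : inord i = Ordinal im /\ inord j = Ordinal jn.
    by split; apply: val_inj; rewrite /= inordK.
  by [].
have [ke|ke] := ltnP k excess.
  by have := vT 0%N k (ltn0Sn _); rewrite /witness_contract ke; apply; have := excess_le; lia.
have /andP [r1 rm] := slot_row_bound ke (ltn_ord k).
have := vT _ _ rm (slot_col_bound k); rewrite /witness_contract slotK //.
by rewrite (_ : (slot_row k == 0)%N = false) //; lia.
Qed.

Lemma witness_annihilator_det :
  \det (annihilator_mx witness_x witness_piv witness_J witness) != 0.
Proof.
apply: (@det_neq0_rows_free _ _ _ (fun p k => kernel_vec p k)); last exact: kernel_vec_free.
move=> p.
have [js vjs] : exists js : 'I_l, kernel_vec p js != 0.
  have [pu|pc] := boolP ((p < excess)%N || inK (slot_col p)).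
    by exists p; rewrite kernel_vec_unit // eqxx oner_eq0.
  exists (Ordinal (leq_ltn_trans (leq0n _) (ltn_ord p))).
  move: pc; rewrite negb_or -leqNgt /kernel_vec => /andP [pe pK].
  by rewrite ltnNge pe (negbTE pK) /= excess_gt0 ?eqxx oner_eq0.
have [t t0 Ht] := adj_lastcol_span vjs (fun c Hc => witness_kernel_span Hc).
by exists t => // k; rewrite mxE Ht.
Qed.

Definition witness_seq : seq R :=
  mkseq (fun idx => witness_entry (idx %/ (n * l)) ((idx %/ l) %% n) (idx %% l)) (m * n * l).

Lemma size_witness_seq : size witness_seq = (m * n * l)%N.
Proof. by rewrite size_mkseq. Qed.

Lemma witness_seqK : tensor_of_seq m n l witness_seq = witness.
Proof.
apply/funext => i; apply/funext => j; apply/funext => k.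
rewrite /tensor_of_seq /witness_seq nth_mkseq; last first.
  have := ltn_ord i; have := ltn_ord j; have := ltn_ord k; nia.
rewrite /witness; congr witness_entry.
- have -> : ((i * n + j) * l + k = i * (n * l) + (j * l + k))%N by nia.
  rewrite divnMDl // divn_small //; first by rewrite addn0.
  have := ltn_ord j; have := ltn_ord k; nia.
- rewrite divnMDl // divn_small ?addn0 // modnMDl modn_small //.
- by rewrite modnMDl modn_small.
Qed.

End Witness.

Lemma tensor_rank_eq_uniq (R : realType) m n l (T : tensor R m n l) r1 r2 :
  tensor_rank_eq T r1 -> tensor_rank_eq T r2 -> r1 = r2.
Proof. by move=> [h1 m1] [h2 m2]; apply/eqP; rewrite eqn_leq m1 ?m2. Qed.

Section GenericRank.
Variables (R : realType) (m' n' l' : nat).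
Local Notation m := m'.+1.
Local Notation n := n'.+1.
Local Notation l := l'.+1.
Hypothesis lt_slices_l : (m' * n < l)%N.
Hypothesis lt_l_mn : (l < m * n)%N.
Local Notation N := (m * n * l)%N.
Local Notation tensor_of := (tensor_of_seq m n l).
Local Notation witness_constraint := (constraint_mx (witness_x R m' n' l')
  (witness_piv m' n' l') (witness_J m' n' l')).
Local Notation witness_annihilator := (annihilator_mx (witness_x R m' n' l')
  (witness_piv m' n' l') (witness_J m' n' l')).

Definition generic_poly (s : seq R) : R :=
  \det (gram_mx (tensor_of s)) * \det (witness_annihilator (tensor_of s)).

Lemma rank_eq_generic s : generic_poly s != 0 -> tensor_rank_eq (tensor_of s) l.
Proof.
rewrite mulf_eq0 negb_or => /andP [dG dC]; split; last by move=> r; exact: rank_ge_gram.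
exact: (rank_le_annihilator lt_slices_l (witness_x_piv R lt_slices_l lt_l_mn) dC).
Qed.

Lemma polyfun_tensor_of i j k : polyfun N (fun s : seq R => tensor_of s i j k).
Proof.
by apply: polyfun_nth; have := ltn_ord i; have := ltn_ord j; have := ltn_ord k; nia.
Qed.

Lemma polyfun_constraint p r k : polyfun N (fun s => witness_constraint (tensor_of s) p r k).
Proof.
apply: eq_polyfun => [s|]; first by rewrite mxE.
case: (r < m' * n)%N; last by case: (r < l')%N; exact: polyfun_cst.
apply: polyfunD; first exact: polyfun_tensor_of.
apply: (eq_polyfun (f := fun s => - witness_x R m' n' l' p _ * tentry (tensor_of s) _ _ k)).
  by move=> s; rewrite mulNr.
by apply: polyfunM; [exact: polyfun_cst|exact: polyfun_tensor_of].
Qed.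

Lemma polyfun_generic : polyfun N generic_poly.
Proof.
apply: polyfunM; apply: polyfun_det => a b.
  apply: eq_polyfun => [s|]; first by rewrite mxE.
  by apply: polyfun_sum => i; apply: polyfun_sum => j; apply: polyfunM; exact: polyfun_tensor_of.
apply: eq_polyfun => [s|]; first by rewrite mxE.
exact: (polyfun_adj (A := fun s => witness_constraint (tensor_of s) a) (polyfun_constraint a)).
Qed.

Lemma generic_poly_witness : generic_poly (witness_seq R m' n' l') != 0.
Proof.
rewrite /generic_poly (witness_seqK R lt_slices_l lt_l_mn) mulf_neq0 //.
  exact: (witness_gram_det R lt_slices_l lt_l_mn).
exact: (witness_annihilator_det R lt_slices_l lt_l_mn).
Qed.

Lemma typical_rank_generic r : typical_rank R m n l r <-> r = l.
Proof.
have gen := gauss_iter_le0 polyfun_generic (size_witness_seq R m' n' l') generic_poly_witness.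
split => [[_ Pr_pos]|->].
  apply/eqP; apply: contraT => rl; move: Pr_pos; rewrite ltNge.
  rewrite (gen _ _) // => [s|s /rank_eq_generic rk_l]; rewrite /indic.
    by case: (_ \in _) => /=; rewrite ?lexx ?lee01.
  case: (boolP (_ \in _)) => //; rewrite inE /= => rk_r.
  by move: rl; rewrite (tensor_rank_eq_uniq rk_r rk_l) eqxx.
split => //; apply: (@lt_le_trans _ _ 1%E); first by rewrite lte01.
apply: (gauss_iter_ge1 polyfun_generic (size_witness_seq R m' n' l') generic_poly_witness).
  by move=> s; rewrite /indic lee_fin ler0n.
by move=> s /rank_eq_generic rk_l; rewrite /indic (_ : _ \in _) //; rewrite inE.
Qed.

End GenericRank.

Theorem mainTheorem11 (R : realType) (m n l : nat) :
  (2 <= m)%N -> (m <= n)%N -> (n <= l)%N ->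
  ((m - 1) * n < l)%N -> (l < m * n)%N ->
  forall r : nat, typical_rank R m n l r <-> r = l.
Proof.
(* Only [(m - 1) n < l < m n] is needed. *)
case: m => [//|m']; case: n => [|n']; first by rewrite ltn0.
case: l => [|l']; first by rewrite ltn0.
move=> _ _ _; rewrite subn1 /=; exact: typical_rank_generic.
Qed.
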